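(* For every base $b\ge 2$ there exist infinitely many (distinct) arithmetic progressions of length $b$ all of whose terms are $b$-wARH numbers.
   Context: Fix a base $b\ge 2$. $s_b(N)$ is the sum of the base-$b$ digits of $N$. For a positive integer $X$, its reversal $X^R$ is the integer whose base-$b$ representation is that of $X$ written in reverse order (leading zeros of the result are dropped). A positive integer $N$ is a $b$-wARH number if there exists an integer $A\ge 0$ such that $N=(A+s_b(N))+(A+s_b(N))^R$. *)

From mathcomp Require Import all_boot.
Set Implicit Arguments. Unset Strict Implicit. Unset Printing Implicit Defensive.

(* Base-b digits of n, least significant first, no leading zeros
   (digits b 0 = [::]). Fuel n suffices since n %/ b < n for b >= 2, n > 0. *)
Fixpoint digits_aux (b fuel n : nat) : seq nat :=
  match fuel with
  | 0 => [::]
  | fuel'.+1 => if n == 0 then [::] else (n %% b) :: digits_aux b fuel' (n %/ b)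
  end.

Definition digits (b n : nat) : seq nat := digits_aux b n n.

Definition from_digits (b : nat) (s : seq nat) : nat :=
  foldr (fun d acc => d + b * acc) 0 s.

Definition sdig (b n : nat) : nat := sumn (digits b n).

(* X^R: reverse the base-b representation; leading zeros of the result
   vanish automatically when evaluated. *)
Definition rev_b (b n : nat) : nat := from_digits b (rev (digits b n)).

Definition wARH (b N : nat) : Prop :=
  0 < N /\ exists A : nat, N = (A + sdig b N) + rev_b b (A + sdig b N).

From mathcomp Require Import all_boot.
From mathcomp Require Import zify.

(* Fix m = j + 1 >= 1 and consider the progression of the b
   multiples k * (b^m + 1), 1 <= k <= b (first term and difference b^m + 1).
   Each term N is written as N = X + X^R with s_b(N) <= X, so A = X - s_b(N)
   witnesses that N is b-wARH.  Writing [x 0^j y] for the little-endian digit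
   string x, j zeros, y (value x + y * b^(j+1)):
   - for 1 <= k < b, N = [k 0^j k] has digit sum 2k, and X = k * b^m = [0 0^j k]
     has X^R = k;
   - for k = b, N = b * [1 0^j 1] has digit sum 2, and X = [1 0^j (b-1)] has
     X^R = [(b-1) 0^j 1], so X + X^R = b + b^(m+1). *)

Lemma from_digits_cat b s t :
  from_digits b (s ++ t) = from_digits b s + b ^ size s * from_digits b t.
Proof.
elim: s => [|x s IH] /=; first by rewrite expn0 mul1n.
by rewrite IH expnS mulnDr mulnA addnA.
Qed.

Lemma from_digits_cons b x s : from_digits b (x :: s) = x + b * from_digits b s.
Proof. by []. Qed.

Lemma from_digits_nseq0 b k : from_digits b (nseq k 0) = 0.
Proof. by elim: k => //= k ->; rewrite muln0. Qed.

Definition spread (j x y : nat) : seq nat := x :: nseq j 0 ++ [:: y].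
Arguments spread : simpl never.

Lemma from_digits_spread b j x y :
  from_digits b (spread j x y) = x + y * b ^ j.+1.
Proof.
by rewrite /spread /= from_digits_cat from_digits_nseq0 size_nseq /= expnS; lia.
Qed.

Lemma rev_spread j x y : rev (spread j x y) = spread j y x.
Proof. by rewrite /spread rev_cons rev_cat rev_nseq /= -cats1. Qed.

Lemma sumn_spread j x y : sumn (spread j x y) = x + y.
Proof. by rewrite /spread /= sumn_cat sumn_nseq /= addn0 mul0n add0n. Qed.

Section Digits.
Variable b : nat.
Hypothesis hb : 2 <= b.

Lemma digits_aux_fuel fuel1 fuel2 n :
  n <= fuel1 -> n <= fuel2 -> digits_aux b fuel1 n = digits_aux b fuel2 n.
Proof.
elim: fuel1 fuel2 n => [|f1 IH] [|f2] n //= h1 h2.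
- by move: h1; rewrite leqn0 => /eqP ->.
- by move: h2; rewrite leqn0 => /eqP ->.
case: eqP => // /eqP nz; have lt_div : n %/ b < n by apply: ltn_Pdiv; lia.
by congr (_ :: _); apply: IH; lia.
Qed.

Lemma digitsE n :
  digits b n = if n == 0 then [::] else n %% b :: digits b (n %/ b).
Proof.
rewrite /digits; case: n => [|n] //=; congr (_ :: _).
have lt_div : n.+1 %/ b < n.+1 by apply: ltn_Pdiv; lia.
by apply: digits_aux_fuel; lia.
Qed.

(* A canonical digit string: every digit below b, no trailing (= leading) zero. *)
Definition canonical (s : seq nat) : bool :=
  all (fun x => x < b) s && (last 1 s != 0).

Lemma canonical_spread j x y : x < b -> 0 < y < b -> canonical (spread j x y).
Proof.
move=> xb /andP [y0 yb].
by rewrite /canonical /spread /= all_cat all_nseq /= cats1 last_rcons; lia.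
Qed.

Lemma digits_from_digits s : canonical s -> digits b (from_digits b s) = s.
Proof.
elim: s => [|x t IH] //= /andP [/andP [xb all_t] last_t].
have can_t : canonical t by apply/andP; split=> //; case: t {IH all_t} last_t.
rewrite digitsE; case: eqP => [val0 | /eqP val_nz].
- have t_nil : t = [::].
    have : from_digits b t = 0 by lia.
    by move/(f_equal (digits b)); rewrite IH // digitsE.
  by move: last_t; rewrite t_nil /=; lia.
- rewrite [b * _]mulnC addnC modnMDl divnMDl; last lia.
  by rewrite modn_small // divn_small // addn0 IH.
Qed.

Lemma rev_b_from_digits s :
  canonical s -> rev_b b (from_digits b s) = from_digits b (rev s).
Proof. by move=> can_s; rewrite /rev_b digits_from_digits. Qed.

Lemma sdig_from_digits s : canonical s -> sdig b (from_digits b s) = sumn s.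
Proof. by move=> can_s; rewrite /sdig digits_from_digits. Qed.

Lemma wARH_of_split n X :
  0 < n -> sdig b n <= X -> n = X + rev_b b X -> wARH b n.
Proof. by move=> n_gt0 le_sX eq_n; split=> //; exists (X - sdig b n); rewrite subnK. Qed.

Lemma wARH_small_multiple j k :
  0 < k < b -> wARH b (k * (b ^ j.+1 + 1)).
Proof.
move=> k_range; have bm_ge2 : 2 <= b ^ j.+1 by rewrite expnS; nia.
have can_X : canonical (spread j 0 k) by apply: canonical_spread; lia.
have can_n : canonical (spread j k k) by apply: canonical_spread; lia.
have n_eq : k * (b ^ j.+1 + 1) = from_digits b (spread j k k).
  by rewrite from_digits_spread; lia.
apply: (wARH_of_split _ (from_digits b (spread j 0 k))); first by nia.
- by rewrite n_eq sdig_from_digits // sumn_spread from_digits_spread; nia.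
- by rewrite rev_b_from_digits // rev_spread !from_digits_spread; lia.
Qed.

Lemma wARH_last_multiple j : wARH b (b * (b ^ j.+1 + 1)).
Proof.
have bm_ge1 : 1 <= b ^ j.+1 by rewrite expn_gt0; lia.
have can_X : canonical (spread j 1 b.-1) by apply: canonical_spread; lia.
have can_n : canonical (0 :: spread j 1 1).
  by rewrite /canonical /spread /= all_cat all_nseq /= cats1 last_rcons; lia.
have n_eq : b * (b ^ j.+1 + 1) = from_digits b (0 :: spread j 1 1).
  by rewrite from_digits_cons from_digits_spread; lia.
apply: (wARH_of_split _ (from_digits b (spread j 1 b.-1))); first by nia.
- rewrite n_eq sdig_from_digits // -cat1s sumn_cat sumn_spread from_digits_spread.
  have : 1 * 1 <= b.-1 * b ^ j.+1 by apply: leq_mul; lia.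
  rewrite /=; lia.
- rewrite rev_b_from_digits // rev_spread !from_digits_spread n_eq.
  rewrite from_digits_cons from_digits_spread; nia.
Qed.

Lemma wARH_multiple j k : 0 < k <= b -> wARH b (k * (b ^ j.+1 + 1)).
Proof.
case/andP=> k_gt0; rewrite leq_eqVlt => /orP [/eqP -> | k_lt].
- exact: wARH_last_multiple.
- by apply: wARH_small_multiple; rewrite k_gt0.
Qed.

End Digits.

Theorem corollary7 (b : nat) (hb : 2 <= b) :
  forall N : nat, exists a d : nat,
    [/\ 0 < d, N <= a + d & forall i : nat, i < b -> wARH b (a + i * d)].
Proof.
move=> N; have N_small : N.+1 < b ^ N.+1 by apply: ltn_expl.
exists (b ^ N.+1 + 1), (b ^ N.+1 + 1); split; [lia | lia |].
move=> i i_lt; rewrite -mulSn.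
by apply: wARH_multiple => //; lia.
Qed.
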